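(* Let $n,m,t$ be positive integers. There is a map $\Phi:[n]^n\to[n]^n$ with the following property. Let $\sigma\in\mathcal{S}_n$, let $I\subseteq[n]$ be a set of $t$ positions with $\sigma(i)>m$ for all $i\in I$, and let $\sigma_e$ be given by $\sigma_e(i)=\sigma(i)-1$ for $i\in I$ and $\sigma_e(i)=\sigma(i)$ for $i\notin I$. Then $\hat\sigma=\Phi(\sigma_e)$ satisfies: there exist $\ell\le t$ and distinct positions $i_1,\ldots,i_\ell\in[n]$ with $\sigma(i_j)>m$ for all $j\in[\ell]$ and $\sigma(i_j)\le\sigma(i_{j+1})-2$ for all $j\in[\ell-1]$, such that $\hat\sigma(i)=\sigma(i)-1$ for $i\in\{i_1,\ldots,i_\ell\}$ and $\hat\sigma(i)=\sigma(i)$ for all other $i\in[n]$.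
   Context: $[n]=\{1,\ldots,n\}$ and $\mathcal{S}_n$ is the set of permutations of $[n]$, written as sequences $(\sigma(1),\ldots,\sigma(n))$. *)

From mathcomp Require Import all_boot all_fingroup.
Set Implicit Arguments. Unset Strict Implicit. Unset Printing Implicit Defensive.

(* Convention: [n] = {1..n} is represented by 'I_n = {0..n-1};
   the element x : 'I_n stands for the number nat1 x = x + 1 in [n]. *)
Definition nat1 {n : nat} (x : 'I_n) : nat := (nat_of_ord x).+1.

From mathcomp Require Import all_boot all_fingroup.
From mathcomp Require Import zify.

(* A permutation of 'I_n has exactly n - k entries of value at least k, so the
   lowered values can be read off sigma_e alone: k was lowered iff fewer than
   n - k entries of sigma_e are at least k (k is deficient).  Phi (repair)
   raises an entry v back to v + 1 when v + 1 is deficient (v is a lowered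
   entry) and so is v (its predecessor value was lowered too).  This undoes
   every lowering except at the smallest value of each maximal run of
   consecutive lowered values; these run starts are at most t positions with
   pairwise non-adjacent values. *)

Set Implicit Arguments.
Unset Strict Implicit.
Unset Printing Implicit Defensive.

Definition deficient {n} (f : {ffun 'I_n -> 'I_n}) (k : nat) : bool :=
  #|[set j | k <= f j]| < n - k.

Definition repair {n} (f : {ffun 'I_n -> 'I_n}) : {ffun 'I_n -> 'I_n} :=
  [ffun i => if deficient f (f i) && deficient f (f i).+1
             then insubd (f i) (f i).+1 else f i].

Definition run_starts {n} (sigma : {perm 'I_n}) (I : {set 'I_n}) : {set 'I_n} :=
  [set i in I | ~~ [exists j in I, (sigma j).+1 == sigma i :> nat]].

Lemma card_ord_ge n k : #|[set i : 'I_n | k <= i]| = n - k.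
Proof.
rewrite cardsE cardE /enum_mem -enumT size_filter.
rewrite -(count_map val (leq k)) val_enum_ord.
elim: n => // n IHn.
by rewrite -addn1 iotaD count_cat IHn /=; lia.
Qed.

Lemma card_perm_ge n (s : {perm 'I_n}) k : #|[set j | k <= s j]| = n - k.
Proof.
rewrite -(@card_ord_ge n k) -[in RHS](card_preimset _ (@perm_inj _ s)).
by apply: eq_card => j; rewrite !inE.
Qed.

Lemma card_perm_fiber n (s : {perm 'I_n}) (I : {set 'I_n}) k :
  #|[set j in I | s j == k :> nat]| = [exists j in I, s j == k :> nat].
Proof.
case: existsP => [[j0 /andP [j0I /eqP sj0]] | noj]; last first.
  apply/eqP; rewrite cards_eq0; apply/eqP/setP => j; rewrite !inE.
  by apply/negP => jk; apply: noj; exists j.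
rewrite /= -(cards1 j0); apply: eq_card => j; rewrite !inE.
apply/andP/eqP => [[_ /eqP sj] | ->]; last by rewrite j0I sj0.
by apply: (perm_inj (s := s)); apply: ord_inj; rewrite sj sj0.
Qed.

Section LoweredPermutation.

Variables (n : nat) (sigma : {perm 'I_n}) (I : {set 'I_n}) (f : {ffun 'I_n -> 'I_n}).
Hypothesis sigma_gt0 : forall i, i \in I -> 0 < sigma i.
Hypothesis f_lowered :
  forall i, f i = (if i \in I then (sigma i).-1 else sigma i) :> nat.

Lemma deficientE k : deficient f k = [exists j in I, sigma j == k :> nat].
Proof.
have sub_ge : [set j | k <= f j] \subset [set j | k <= sigma j].
  by apply/subsetP => j; rewrite !inE f_lowered; case: ifP => // _; lia.
have diff_ge : [set j | k <= sigma j] :\: [set j | k <= f j] =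
               [set j in I | sigma j == k :> nat].
  apply/setP => j; rewrite !inE f_lowered.
  by case: ifP => jI /=; [have := sigma_gt0 jI; lia | lia].
rewrite /deficient -(card_perm_ge sigma k).
rewrite -(cardsID [set j | k <= f j] [set j | k <= sigma j]).
by rewrite (setIidPr sub_ge) diff_ge card_perm_fiber; case: existsP; lia.
Qed.

Lemma repair_lowered i :
  repair f i = (if i \in run_starts sigma I then (sigma i).-1 else sigma i) :> nat.
Proof.
rewrite ffunE !deficientE inE f_lowered.
case: (boolP (i \in I)) => iI /=; last first.
  suff -> : [exists j in I, sigma j == sigma i :> nat] = false.
    by rewrite f_lowered (negPf iI).
  apply/existsP => -[j /andP [jI /eqP /ord_inj /perm_inj ji]].
  by rewrite ji (negPf iI) in jI.
have si_gt0 := sigma_gt0 iI.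
have -> : [exists j in I, sigma j == (sigma i).-1.+1 :> nat].
  by rewrite prednK //; apply/existsP; exists i; rewrite iI eqxx.
have -> : [exists j in I, sigma j == (sigma i).-1 :> nat] =
          [exists j in I, (sigma j).+1 == sigma i :> nat].
  by apply: eq_existsb => j; apply/eqP/eqP; lia.
case: existsP => _ /=; last by rewrite f_lowered iI.
by rewrite val_insubd prednK // ltn_ord.
Qed.

End LoweredPermutation.

Lemma sorted_sort_sep (T : eqType) (key : T -> nat) (r : rel T) (s : seq T) :
  uniq s -> {in s &, forall a b, a != b -> key a <= key b -> r a b} ->
  sorted r (sort (fun a b => key a <= key b) s).
Proof.
move=> s_uniq r_sep; apply: pairwise_sorted.
have key_sorted :
    pairwise (fun a b => key a <= key b) (sort (fun a b => key a <= key b) s).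
  rewrite -sorted_pairwise ?sort_sorted // => [a b | a b c].
    exact: leq_total.
  exact: leq_trans.
have sort_neq : pairwise [rel a b | a != b] (sort (fun a b => key a <= key b) s).
  by rewrite -uniq_pairwise sort_uniq.
apply: (@sub_in_pairwise _ (mem s) [rel a b | (a != b) && (key a <= key b)]).
- by move=> a b sa sb /andP [ab le_ab]; apply: r_sep.
- by apply/allP => a; rewrite mem_sort.
- by rewrite pairwise_relI sort_neq.
Qed.

Lemma run_starts_subset n (sigma : {perm 'I_n}) (I : {set 'I_n}) :
  run_starts sigma I \subset I.
Proof. by apply/subsetP => i; rewrite inE => /andP []. Qed.

Lemma run_starts_sep n (sigma : {perm 'I_n}) (I : {set 'I_n}) x y :
  x \in run_starts sigma I -> y \in run_starts sigma I -> x != y ->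
  sigma x <= sigma y -> nat1 (sigma x) <= nat1 (sigma y) - 2.
Proof.
rewrite !inE => /andP [xI _] /andP [_ not_succ] xy le_xy.
have ne_xy : sigma x != sigma y :> nat.
  by apply: contra xy => /eqP /ord_inj /perm_inj ->.
have not_next : (sigma x).+1 != sigma y :> nat.
  by apply: contra not_succ => next_xy; apply/existsP; exists x; rewrite xI.
by rewrite /nat1; lia.
Qed.

Theorem lemma2 (n m t : nat) (hn : 0 < n) (hm : 0 < m) (ht : 0 < t) :
  exists Phi : {ffun 'I_n -> 'I_n} -> {ffun 'I_n -> 'I_n},
  forall (sigma : {perm 'I_n}) (I : {set 'I_n}),
    #|I| = t ->
    (forall i, i \in I -> m < nat1 (sigma i)) ->
    forall sigma_e : {ffun 'I_n -> 'I_n},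
    (forall i, nat1 (sigma_e i) =
               (if i \in I then nat1 (sigma i) - 1 else nat1 (sigma i))) ->
    exists s : seq 'I_n,
      [/\ size s <= t,
          uniq s,
          (forall i, i \in s -> m < nat1 (sigma i)),
          sorted (fun a b => nat1 (sigma a) <= nat1 (sigma b) - 2) s &
          (forall i, nat1 (Phi sigma_e i) =
                     (if i \in s then nat1 (sigma i) - 1 else nat1 (sigma i)))].
Proof.
exists repair => sigma I card_I I_gt_m f f_def.
have sigma_gt0 i : i \in I -> 0 < sigma i by move/I_gt_m; rewrite /nat1; lia.
have f_lowered i : f i = (if i \in I then (sigma i).-1 else sigma i) :> nat.
  by have := f_def i; rewrite /nat1; case: ifP; lia.
exists (sort (fun a b => sigma a <= sigma b) (enum (run_starts sigma I))); split.
- by rewrite size_sort -cardE -card_I subset_leq_card ?run_starts_subset.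
- by rewrite sort_uniq enum_uniq.
- move=> i; rewrite mem_sort mem_enum.
  by move=> /(subsetP (run_starts_subset _ _)) /I_gt_m.
- apply: sorted_sort_sep; first exact: enum_uniq.
  by move=> x y; rewrite !mem_enum; apply: run_starts_sep.
- move=> i; rewrite mem_sort mem_enum /nat1 (repair_lowered sigma_gt0 f_lowered).
  case: ifP => // /(subsetP (run_starts_subset _ _)) /sigma_gt0; lia.
Qed.
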